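(* Let $p$ be a state of a pDFA $\mathcal{A}$ and let $q$ be a state of a pDFA $\mathcal{B}$. Then the rooted involutive graphs $\Gamma(p)$ and $\Gamma(q)$ are isomorphic as rooted involutive graphs (not considering node labels) if and only if $\mathscr{L}(p)=\mathscr{L}(q)$.
   Context: A pDFA (partial deterministic finite automaton) over a finite alphabet $A$ is a finite $A$-edge-labeled directed graph $(Q,T)$, $T\subseteq Q\times A\times Q$, such that from each state there is at most one transition with any given label. For a state $p$, $\mathscr{L}(p)\subseteq A^*$ is the set of words labeling a run (finite path) starting in $p$. The graph $\Gamma(p)$ has as nodes the runs starting in $p$ (equivalently the words in $\mathscr{L}(p)$), root the empty run, and an edge from $\varrho$ to $\varrho\tau$ labeled by the label $a$ of the transition $\tau$, together with all inverse edges from $\varrho\tau$ to $\varrho$ labeled $a^{-1}$ (using the involutive alphabet $A^{\pm1}$ if $A$ is not involutive). An isomorphism of rooted edge-labeled graphs is a bijection on nodes preserving the root and preserving and reflecting labeled edges. *)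

From mathcomp Require Import all_boot.
Set Implicit Arguments. Unset Strict Implicit. Unset Printing Implicit Defensive.

(* The transition
   set T ⊆ Q × A × Q, with at most one a-transition out of each state, is
   represented by the partial function [d p a = Some q] iff (p,a,q) ∈ T. *)
Definition pdfa (Q A : finType) := Q -> A -> option Q.

Section PDFA.
Variables (Q A : finType) (d : pdfa Q A).

Fixpoint run (p : Q) (w : seq A) : option Q :=
  match w with
  | [::] => Some p
  | a :: w' => match d p a with Some q => run q w' | None => None end
  end.

Definition lang (p : Q) : pred (seq A) := fun w => isSome (run p w).

(* Nodes of Γ(p): the runs from p, identified with the words of L(p). *)
Definition gnode (p : Q) := {w : seq A | lang p w}.

Definition groot (p : Q) : gnode p := exist _ [::] (erefl true).

(* Involutive alphabet A^{±1}: [inl a] is the letter a, [inr a] is a^{-1}. *)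
Definition ilabel := (A + A)%type.

Definition gedge (p : Q) (u : gnode p) (l : ilabel) (v : gnode p) : Prop :=
  match l with
  | inl a => val v = rcons (val u) a
  | inr a => val u = rcons (val v) a
  end.
End PDFA.

Definition groot_iso (A QA QB : finType) (dA : pdfa QA A) (dB : pdfa QB A)
  (p : QA) (q : QB) : Prop :=
  exists f : gnode dA p -> gnode dB q,
    [/\ bijective f, f (groot dA p) = groot dB q &
        forall (u : gnode dA p) (l : ilabel A) (v : gnode dA p),
          gedge u l v <-> gedge (f u) l (f v)].

From mathcomp Require Import all_boot.
Set Implicit Arguments. Unset Strict Implicit. Unset Printing Implicit Defensive.

(* An isomorphism fixes the root and preserves forward edges, so by induction
   along a run it sends each word to itself; hence the two languages coincide.
   Conversely, if the languages coincide then the identity on words is an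
   isomorphism, since edges of [Γ(p)] only depend on the words. *)

Section Runs.
Variables (Q A : finType) (d : pdfa Q A).

Lemma run_cat p w s : run d p (w ++ s) = obind (fun r => run d r s) (run d p w).
Proof. by elim: w p => [|a w IHw] p //=; case: (d p a). Qed.

Lemma lang_rcons p w a : lang d p (rcons w a) -> lang d p w.
Proof. by rewrite /lang -cats1 run_cat; case: (run d p w). Qed.

End Runs.

Section RootedMorphism.
Variables (A QA QB : finType) (dA : pdfa QA A) (dB : pdfa QB A).
Variables (p : QA) (q : QB) (f : gnode dA p -> gnode dB q).
Hypothesis f_root : f (groot dA p) = groot dB q.
Hypothesis f_edge : forall u a v, gedge u (inl a) v -> gedge (f u) (inl a) (f v).

Lemma val_gmorph u : val (f u) = val u.
Proof.
suff: forall w u, val u = w -> val (f u) = w by apply.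
elim/last_ind => [|w a IHw] {}u uw.
  have -> : u = groot dA p by apply: val_inj.
  by rewrite f_root.
have lw : lang dA p w by apply: (lang_rcons (a := a)); rewrite -uw; apply: valP.
have /f_edge /= -> : gedge (exist _ w lw) (inl a) u by [].
by rewrite (IHw (exist _ w lw)).
Qed.

Lemma lang_gmorph w : lang dA p w -> lang dB q w.
Proof. by move=> Hw; rewrite -[w]/(val (exist _ w Hw)) -val_gmorph; apply: valP. Qed.

End RootedMorphism.

Section Isomorphism.
Variables (A QA QB : finType) (dA : pdfa QA A) (dB : pdfa QB A) (p : QA) (q : QB).

Lemma lang_eq_groot_iso : groot_iso dA dB p q -> forall w, lang dA p w = lang dB q w.
Proof.
case=> f [[g _ gK] f_root f_edge] w.
have f_fwd u a v : gedge u (inl a) v -> gedge (f u) (inl a) (f v) by move/f_edge.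
apply/idP/idP => [|Hw]; first exact: lang_gmorph f_root f_fwd w.
have g_val : val (g (exist _ w Hw)) = w by rewrite -(val_gmorph f_root f_fwd) gK.
by rewrite -g_val; apply: valP.
Qed.

Hypothesis eq_lang : forall w, lang dA p w = lang dB q w.

Definition gnode_cast (u : gnode dA p) : gnode dB q :=
  exist _ (val u) (etrans (esym (eq_lang (val u))) (valP u)).

Definition gnode_uncast (v : gnode dB q) : gnode dA p :=
  exist _ (val v) (etrans (eq_lang (val v)) (valP v)).

Lemma groot_iso_lang_eq : groot_iso dA dB p q.
Proof.
exists gnode_cast; split; last by move=> u [] a v.
- by exists gnode_uncast => u; apply: val_inj.
- exact: val_inj.
Qed.

End Isomorphism.

Theorem fact3p7 (A QA QB : finType) (dA : pdfa QA A) (dB : pdfa QB A)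
  (p : QA) (q : QB) :
  groot_iso dA dB p q <-> (forall w : seq A, lang dA p w = lang dB q w).
Proof. by split; [apply: lang_eq_groot_iso | apply: groot_iso_lang_eq]. Qed.
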